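(* Let $A$ be an $n\times n$ and $B$ an $m\times m$ complex matrix, and for $k=1,\dots,m$ let $1\le i_k,j_k\le n$ and $\alpha_k,\beta_k\in\mathbb{C}$. Let $M$ be the $(n+m)\times(n+m)$ block matrix $M=\begin{bmatrix}A & [\alpha_1\mathbf{e}_{i_1},\dots,\alpha_m\mathbf{e}_{i_m}]\\ [\beta_1\mathbf{e}_{j_1},\dots,\beta_m\mathbf{e}_{j_m}]^T & B\end{bmatrix}$, where $\mathbf{e}_i$ is the $i$-th standard basis column vector of $\mathbb{C}^n$ (so the $k$-th column of the upper-right block is $\alpha_k\mathbf{e}_{i_k}$ and the $k$-th row of the lower-left block is $\beta_k\mathbf{e}_{j_k}^T$). Then $$\det(M)=\sum_{S,T}\varepsilon_{S,T}\,\alpha_T\beta_S\,B_{S,T}A_{S,T}$$ for some signs $\varepsilon_{S,T}\in\{\pm1\}$, where the sum is over all pairs $S,T\subseteq\{1,\dots,m\}$ with $|S|=|T|$.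
   Context: For $S,T\subseteq\{1,\dots,m\}$ with $|S|=|T|$: $B_{S,T}$ is the determinant of the matrix obtained from $B$ by deleting the rows indexed by $S$ and the columns indexed by $T$ (the determinant of the empty matrix being $1$). Let $J(S)=\{j_k: k\in S\}$ and $I(T)=\{i_k:k\in T\}$; $A_{S,T}$ is the determinant of the matrix obtained from $A$ by deleting the rows indexed by $I(T)$ and the columns indexed by $J(S)$ if $|I(T)|=|J(S)|=|T|=|S|$, and $A_{S,T}=0$ otherwise. Finally $\alpha_T=\prod_{k\in T}\alpha_k$ and $\beta_S=\prod_{k\in S}\beta_k$. *)

From HB Require Import structures.
From mathcomp Require Import all_boot all_order all_algebra.
Set Implicit Arguments. Unset Strict Implicit. Unset Printing Implicit Defensive.
Import GRing.Theory.
Local Open Scope ring_scope.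

(* [minor A Rs Cs] : determinant of the matrix obtained from A by deleting the
   rows in Rs and the columns in Cs (remaining rows/columns kept in increasing
   order); 0 if the resulting matrix is not square. det of the empty matrix is 1. *)
Definition minor (R : comNzRingType) (p q : nat) (A : 'M[R]_(p, q))
  (Rs : {set 'I_p}) (Cs : {set 'I_q}) : R :=
  match #|~: Rs| =P #|~: Cs| with
  | ReflectT e =>
      \det (\matrix_(i < #|~: Rs|, j < #|~: Rs|)
              A (enum_val i) (enum_val (cast_ord e j)))
  | ReflectF _ => 0
  end.

Definition Bminor (R : comNzRingType) (m : nat) (B : 'M[R]_m) (S T : {set 'I_m}) : R :=
  minor B S T.

Definition Aminor (R : comNzRingType) (n m : nat) (A : 'M[R]_n)
  (i j : 'I_m -> 'I_n) (S T : {set 'I_m}) : R :=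
  if [&& #|i @: T| == #|T|, #|j @: S| == #|S| & #|S| == #|T|]
  then minor A (i @: T) (j @: S) else 0.

Definition bordered (R : comNzRingType) (n m : nat) (A : 'M[R]_n) (B : 'M[R]_m)
  (i j : 'I_m -> 'I_n) (alpha beta : 'I_m -> R) : 'M[R]_(n + m) :=
  block_mx A (\matrix_(r < n, k < m) (alpha k * (r == i k)%:R))
             (\matrix_(k < m, c < n) (beta k * (c == j k)%:R)) B.

From HB Require Import structures.
From mathcomp Require Import all_boot all_order all_algebra.
From mathcomp Require Import fingroup perm zify ring.
Import GRing.Theory.
Local Open Scope ring_scope.
Set Implicit Arguments. Unset Strict Implicit. Unset Printing Implicit Defensive.

(* Expand [\det M] by the Leibniz formula.  For a permutation [s], let [S] be
   the set of [k] such that row [n + k] is sent into the first [n] columns, and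
   [T] the set of [k] such that column [n + k] is reached from one of the first
   [n] rows.  Since the off-diagonal blocks have a single nonzero entry per
   row/column, a nonzero term forces [s] to be admissible for [(S, T)]: [s]
   sends row [i_k] to column [n + k] for [k] in [T], row [n + k] to column [j_k]
   for [k] in [S], the remaining rows of [A] into columns of [A] and the
   remaining rows of [B] into columns of [B].  Counting rows sent to the left
   then gives [|S| = |T|], and injectivity of [s] forces [i] to be injective on
   [T] and [j] on [S].  In that case, fixing one admissible [s0], the admissible
   permutations are exactly [s0] followed by an arbitrary permutation of the
   columns of [A] outside [J(S)] and one of the columns of [B] outside [T], so
   their terms sum to [sign s0 * alpha_T * beta_S * B_{S,T} * A_{S,T}];
   otherwise there are no admissible permutations and [A_{S,T} = 0]. *)

Section TransportPerm.
Variables (X T : finType) (f : X -> T).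
Hypothesis f_inj : injective f.
Implicit Types t : {perm X}.

Definition transport_fun t (y : T) : T :=
  if [pick x | f x == y] is Some x then f (t x) else y.

Lemma transport_fun_inj t : injective (transport_fun t).
Proof.
move=> y1 y2; rewrite /transport_fun.
case: pickP => [x1 /eqP <- | out1]; case: pickP => [x2 /eqP <- | out2] //.
- by move=> /f_inj /perm_inj ->.
- by move=> e; have := out2 (t x1); rewrite e eqxx.
- by move=> e; have := out1 (t x2); rewrite -e eqxx.
Qed.

Definition transport_perm t : {perm T} := perm (@transport_fun_inj t).

Lemma transport_permE t x : transport_perm t (f x) = f (t x).
Proof.
rewrite permE /transport_fun.
by case: pickP => [x' /eqP /f_inj -> // | /(_ x)]; rewrite eqxx.
Qed.

Lemma transport_perm_out t y : (forall x, f x != y) -> transport_perm t y = y.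
Proof.
by move=> fy; rewrite permE /transport_fun; case: pickP => // x; rewrite (negbTE (fy x)).
Qed.

Lemma transport_perm_eq t (s : {perm T}) :
  (forall x, s (f x) = f (t x)) -> (forall y, (forall x, f x != y) -> s y = y) ->
  transport_perm t = s.
Proof.
move=> s_f s_out; apply/permP => y.
case: (pickP (fun x => f x == y)) => [x /eqP <- | out].
  by rewrite transport_permE s_f.
by rewrite transport_perm_out ?s_out // => x; rewrite out.
Qed.

Lemma transport_permM t1 t2 :
  transport_perm (t1 * t2)%g = (transport_perm t1 * transport_perm t2)%g.
Proof.
apply: transport_perm_eq => [x | y out]; rewrite permM.
  by rewrite !transport_permE permM.
by rewrite !transport_perm_out.
Qed.

Lemma transport_perm1 : transport_perm 1%g = 1%g.
Proof. by apply: transport_perm_eq => *; rewrite !perm1. Qed.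

Lemma transport_tperm a b : transport_perm (tperm a b) = tperm (f a) (f b).
Proof.
apply: transport_perm_eq => [x | y out]; first by rewrite inj_tperm.
by rewrite tpermD // eq_sym.
Qed.

Lemma odd_transport_perm t : odd_perm (transport_perm t) = odd_perm t.
Proof.
have [ts -> {t}] := prod_tpermP t.
elim: ts => [_ | [a b] ts IHts /andP [_ /IHts {}IHts]].
  by rewrite !big_nil transport_perm1 !odd_perm1.
rewrite !big_cons transport_permM !odd_permM IHts transport_tperm !odd_tperm.
by rewrite (inj_eq f_inj).
Qed.

End TransportPerm.

Lemma perm_of_bijection (X T : finType) (e g : X -> T) :
  injective e -> injective g -> #|X| = #|T| ->
  exists s : {perm T}, forall x, s (e x) = g x.
Proof.
move=> e_inj g_inj cardXT.
have [e' eK e'K] := inj_card_bij e_inj (eq_leq (esym cardXT)).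
by exists (perm (inj_comp g_inj (can_inj e'K))) => x; rewrite permE /= eK.
Qed.

Lemma perm_factor (X T : finType) (e g : X -> T) (s : {perm T}) :
  injective e -> (forall x, s (e x) \in codom g) ->
  exists t : {perm X}, forall x, s (e x) = g (t x).
Proof.
move=> e_inj s_eg.
have /fin_all_exists [h hP] : forall x, exists y, s (e x) = g y.
  by move=> x; apply/codomP.
have h_inj : injective h.
  by move=> x1 x2 /(congr1 g); rewrite -!hP => /perm_inj /e_inj.
by exists (perm h_inj) => x; rewrite permE.
Qed.

Lemma card_split_ord n m (P : {pred 'I_(n + m)}) :
  #|P| = (#|[pred a | lshift m a \in P]| + #|[pred k | rshift n k \in P]|)%N.
Proof. by rewrite -!sum1_card big_split_ord. Qed.

Lemma enum_val_surj (T0 : finType) (X : {pred T0}) x :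
  x \in X -> exists y : 'I_#|X|, enum_val y = x.
Proof. by move=> x_X; exists (enum_rank_in x_X x); rewrite enum_rankK_in. Qed.

Section Bordered.
Variables (R : comNzRingType) (n m : nat) (A : 'M[R]_n) (B : 'M[R]_m)
  (i j : 'I_m -> 'I_n) (alpha beta : 'I_m -> R).

Local Notation M := (bordered A B i j alpha beta).
(* Keeps [/=] from unfolding the entries of [M] into [block_mx] case splits. *)
Arguments bordered : simpl never.
Local Notation lsh := (@lshift n m).
Local Notation rsh := (@rshift n m).
Implicit Types (S T : {set 'I_m}) (s : 'S_(n + m)) (r : 'I_(n + m)).

Lemma bordered_ul a c : M (lsh a) (lsh c) = A a c.
Proof. by rewrite /bordered block_mxEul. Qed.

Lemma bordered_ur a k : M (lsh a) (rsh k) = alpha k * (a == i k)%:R.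
Proof. by rewrite /bordered block_mxEur mxE. Qed.

Lemma bordered_dl k c : M (rsh k) (lsh c) = beta k * (c == j k)%:R.
Proof. by rewrite /bordered block_mxEdl mxE. Qed.

Lemma bordered_dr k k' : M (rsh k) (rsh k') = B k k'.
Proof. by rewrite /bordered block_mxEdr. Qed.

Lemma bordered_ur_neq0 a k : M (lsh a) (rsh k) != 0 -> a = i k.
Proof. by rewrite bordered_ur; case: (a =P i k) => // _; rewrite mulr0 eqxx. Qed.

Lemma bordered_dl_neq0 k c : M (rsh k) (lsh c) != 0 -> c = j k.
Proof. by rewrite bordered_dl; case: (c =P j k) => // _; rewrite mulr0 eqxx. Qed.

Definition is_left (r : 'I_(n + m)) : bool := (r < n)%N.

Lemma is_left_lshift a : is_left (lsh a).
Proof. by rewrite /is_left /= ltn_ord. Qed.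

Lemma is_left_rshift k : is_left (rsh k) = false.
Proof. by rewrite /is_left /= ltnNge leq_addr. Qed.

Lemma is_leftP r : is_left r -> exists a, r = lsh a.
Proof. by case: (split_ordP r) => [a -> | k ->]; [exists a | rewrite is_left_rshift]. Qed.

Lemma is_rightP r : ~~ is_left r -> exists k, r = rsh k.
Proof. by case: (split_ordP r) => [a -> | k ->]; [rewrite is_left_lshift | exists k]. Qed.

Lemma card_is_left : #|[set r | is_left r]| = n.
Proof.
rewrite card_split_ord [X in (_ + X)%N]eq_card0 ?addn0 => [|k].
  by rewrite -[RHS]card_ord; apply: eq_card => a; rewrite !inE is_left_lshift.
by rewrite !inE is_left_rshift.
Qed.

Definition beta_support (s : 'S_(n + m)) : {set 'I_m} :=
  [set k | is_left (s (rsh k))].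
Definition alpha_support (s : 'S_(n + m)) : {set 'I_m} :=
  [set k | is_left (s^-1%g (rsh k))].

Definition admissible (S T : {set 'I_m}) (s : 'S_(n + m)) : bool :=
  [&& [forall k in T, s (lsh (i k)) == rsh k],
      [forall k in S, s (rsh k) == lsh (j k)],
      [forall a in ~: (i @: T), is_left (s (lsh a))] &
      [forall k in ~: S, ~~ is_left (s (rsh k))]].

Lemma admissibleP S T s :
  reflect [/\ {in T, forall k, s (lsh (i k)) = rsh k},
              {in S, forall k, s (rsh k) = lsh (j k)},
              {in ~: (i @: T), forall a, is_left (s (lsh a))} &
              {in ~: S, forall k, ~~ is_left (s (rsh k))}]
          (admissible S T s).
Proof.
apply: (iffP and4P) => [[/forall_inP s_T /forall_inP s_S /forall_inP s_A /forall_inP s_B]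
                       | [s_T s_S s_A s_B]].
  by split=> [k /s_T/eqP | k /s_S/eqP | a /s_A | k /s_B].
by split; apply/forall_inP => x x_in; rewrite ?s_T ?s_A ?s_B ?s_S.
Qed.

Definition det_term (s : 'S_(n + m)) : R := (-1) ^+ s * \prod_r M r (s r).

Lemma det_term_eq0 s r : M r (s r) = 0 -> det_term s = 0.
Proof. by move=> Mr0; rewrite /det_term (bigD1 r) //= Mr0 mul0r mulr0. Qed.

Lemma det_term_non_admissible s :
  ~~ admissible (beta_support s) (alpha_support s) s -> det_term s = 0.
Proof.
apply: contraNeq => nz_s; have {nz_s} nz r : M r (s r) != 0.
  by apply: contraNneq nz_s => /det_term_eq0 ->.
have alpha_supportP k : k \in alpha_support s -> s (lsh (i k)) = rsh k.
  rewrite inE => /is_leftP [a s'k]; have s_a : s (lsh a) = rsh k by rewrite -s'k permKV.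
  by have := nz (lsh a); rewrite s_a => /bordered_ur_neq0 <-.
apply/admissibleP; split=> // [k | a | k].
- by rewrite inE => /is_leftP [c s_k]; have := nz (rsh k); rewrite s_k => /bordered_dl_neq0 <-.
- apply: contraLR => /is_rightP [k s_a]; rewrite inE negbK.
  have k_supp : k \in alpha_support s by rewrite inE -s_a permK is_left_lshift.
  by have := nz (lsh a); rewrite s_a => /bordered_ur_neq0 ->; rewrite imset_f.
- by rewrite !inE.
Qed.

Lemma admissible_supports S T s :
  admissible S T s -> beta_support s = S /\ alpha_support s = T.
Proof.
case/admissibleP=> s_T s_S s_A s_B; split; apply/setP=> k; rewrite inE.
  have [k_S | k_nS] := boolP (k \in S); first by rewrite s_S // is_left_lshift.
  by apply/negbTE/s_B; rewrite inE.
have [k_T | k_nT] := boolP (k \in T); first by rewrite -(s_T k k_T) permK is_left_lshift.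
apply/negbTE/negP => /is_leftP [a s'k]; have s_a : s (lsh a) = rsh k by rewrite -s'k permKV.
have [/imsetP [k' k'_T a_k'] | a_nT] := boolP (a \in i @: T).
  have /rshift_inj k'k : rsh k' = rsh k by rewrite -s_a a_k' s_T.
  by move: k_nT; rewrite -k'k k'_T.
by have := s_A a; rewrite inE a_nT s_a is_left_rshift => /(_ isT).
Qed.

Lemma admissible_inj S T s :
  admissible S T s -> {in T &, injective i} /\ {in S &, injective j}.
Proof.
case/admissibleP=> s_T s_S _ _; split=> k1 k2 k1_in k2_in e.
  by apply: (@rshift_inj n m); rewrite -s_T // -s_T // e.
by apply: (@rshift_inj n m); apply: (@perm_inj _ s); rewrite !s_S // e.
Qed.

(* Counting the rows that [s] sends into the first [n] columns gives
   [n = (n - #|T|) + #|S|]. *)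
Lemma admissible_card S T s : admissible S T s -> #|S| = #|T|.
Proof.
move=> adm; have [iT _] := admissible_inj adm; have [beta_S _] := admissible_supports adm.
case/admissibleP: adm => s_T _ s_A _.
have left_A : #|[pred a | is_left (s (lsh a))]| = #|~: (i @: T)|.
  apply: eq_card => a; rewrite !inE.
  have [/imsetP [k k_T ->] | a_nT] := boolP (a \in i @: T); last by rewrite s_A ?inE.
  by rewrite s_T // is_left_rshift.
have left_B : #|[pred k | is_left (s (rsh k))]| = #|S|.
  by rewrite -beta_S; apply: eq_card => k; rewrite !inE.
have : #|[pred r | is_left (s r)]| = n.
  rewrite -[RHS]card_is_left -(card_preimset _ (@perm_inj _ s)).
  by apply: eq_card => r; rewrite !inE.
rewrite card_split_ord left_A left_B.
have := cardsC (i @: T); rewrite card_ord (card_in_imset iT); lia.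
Qed.

Lemma sum_det_term_supports S T :
  \sum_(s | (beta_support s, alpha_support s) == (S, T)) det_term s =
  \sum_(s | admissible S T s) det_term s.
Proof.
rewrite (bigID (admissible S T)) /= [X in _ + X]big1 ?addr0 => [|s].
  apply: eq_bigl => s; case: (boolP (admissible S T s)) => [adm|]; last by rewrite andbF.
  by have [-> ->] := admissible_supports adm; rewrite eqxx.
by case/andP => /eqP [<- <-]; apply: det_term_non_admissible.
Qed.

Lemma det_bordered_admissible :
  \det M = \sum_(S : {set 'I_m}) \sum_(T : {set 'I_m} | #|S| == #|T|)
             \sum_(s | admissible S T s) det_term s.
Proof.
rewrite [LHS](partition_big (fun s => (beta_support s, alpha_support s)) predT) //=.
rewrite -(pair_big predT predT (fun S T => \sum_(s | _ == (S, T)) det_term s)) /=.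
apply: eq_bigr => S _; rewrite (bigID (fun T => #|S| == #|T|)) /=.
rewrite [X in _ + X]big1 ?addr0 => [|T neq_ST].
  by apply: eq_bigr => T _; rewrite sum_det_term_supports.
rewrite sum_det_term_supports big_pred0 // => s.
by apply: contraNF neq_ST => /admissible_card ->.
Qed.

Section AdmissibleClass.
Variables (S T : {set 'I_m}).
Hypotheses (iT : {in T &, injective i}) (jS : {in S &, injective j})
  (card_ST : #|S| = #|T|).

Local Notation rowsA := (~: (i @: T)).
Local Notation colsA := (~: (j @: S)).
Local Notation rowsB := (~: S).
Local Notation colsB := (~: T).

Lemma card_blockA : #|rowsA| = #|colsA|.
Proof.
have := cardsC (i @: T); have := cardsC (j @: S).
rewrite card_ord (card_in_imset iT) (card_in_imset jS); lia.
Qed.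

Lemma card_blockB : #|rowsB| = #|colsB|.
Proof. have := cardsC S; have := cardsC T; rewrite card_ord; lia. Qed.

Local Notation castA := (cast_ord card_blockA).
Local Notation castB := (cast_ord card_blockB).

Local Notation piece := (('I_#|rowsA| + 'I_#|rowsB|) + ('I_#|T| + 'I_#|S|))%type.

(* The rows of [M] split into four blocks: the rows of [A] outside [I(T)], the
   rows of [B] outside [S], the rows [i_k] and the rows [n + k] ([k] in [T],
   resp. [S]); likewise the columns: those of [A] outside [J(S)], those of [B]
   outside [T], the columns [n + k] and [j_k].  Admissible permutations map each
   row block onto the matching column block, in a forced way on the last two. *)
Definition row_of (x : piece) : 'I_(n + m) :=
  match x with
  | inl (inl a) => lsh (enum_val a)
  | inl (inr b) => rsh (enum_val b)
  | inr (inl t) => lsh (i (enum_val t))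
  | inr (inr k) => rsh (enum_val k)
  end.

Definition col_of (x : piece) : 'I_(n + m) :=
  match x with
  | inl (inl a) => lsh (enum_val (castA a))
  | inl (inr b) => rsh (enum_val (castB b))
  | inr (inl t) => rsh (enum_val t)
  | inr (inr k) => lsh (j (enum_val k))
  end.

Lemma card_piece : #|{: piece}| = #|'I_(n + m)|.
Proof.
rewrite !card_sum !card_ord.
have := cardsC (i @: T); have := cardsC S; rewrite !card_ord (card_in_imset iT); lia.
Qed.

Lemma row_of_inj : injective row_of.
Proof.
have A_T (a : 'I_#|rowsA|) (t : 'I_#|T|) : (enum_val a == i (enum_val t)) = false.
  by apply: contraTF (enum_valP a) => /eqP ->; rewrite inE negbK imset_f ?enum_valP.
have B_S (b : 'I_#|rowsB|) (k : 'I_#|S|) : (enum_val b == enum_val k) = false.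
  by apply: contraTF (enum_valP b) => /eqP ->; rewrite inE negbK enum_valP.
move=> [[a|b]|[t|k]] [[a'|b']|[t'|k']] /eqP; rewrite /= ?eq_lrshift ?eq_rlshift //.
all: move=> /eqP; first [move/lshift_inj | move/rshift_inj].
all: first [ by move/enum_val_inj -> | by move/(iT (enum_valP _) (enum_valP _))/enum_val_inj ->
           | by move/eqP; rewrite ?A_T ?B_S | by move/esym/eqP; rewrite ?A_T ?B_S ].
Qed.

Lemma col_of_inj : injective col_of.
Proof.
have A_S (a : 'I_#|rowsA|) (k : 'I_#|S|) : (enum_val (castA a) == j (enum_val k)) = false.
  by apply: contraTF (enum_valP (castA a)) => /eqP ->; rewrite inE negbK imset_f ?enum_valP.
have B_T (b : 'I_#|rowsB|) (t : 'I_#|T|) : (enum_val (castB b) == enum_val t) = false.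
  by apply: contraTF (enum_valP (castB b)) => /eqP ->; rewrite inE negbK enum_valP.
move=> [[a|b]|[t|k]] [[a'|b']|[t'|k']] /eqP; rewrite /= ?eq_lrshift ?eq_rlshift //.
all: move=> /eqP; first [move/lshift_inj | move/rshift_inj].
all: first [ by move/enum_val_inj/cast_ord_inj -> | by move/enum_val_inj ->
           | by move/(jS (enum_valP _) (enum_valP _))/enum_val_inj ->
           | by move/eqP; rewrite ?A_S ?B_T | by move/esym/eqP; rewrite ?A_S ?B_T ].
Qed.

Lemma row_of_bij : bijective row_of.
Proof. by apply: inj_card_bij row_of_inj _; rewrite card_piece. Qed.

Lemma exists_base_perm : exists s0 : 'S_(n + m), forall x, s0 (row_of x) = col_of x.
Proof. exact: perm_of_bijection row_of_inj col_of_inj card_piece. Qed.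

Lemma colA_inj : injective (fun a => col_of (inl (inl a))).
Proof. by move=> a a' /col_of_inj [->]. Qed.

Lemma colB_inj : injective (fun b => col_of (inl (inr b))).
Proof. by move=> b b' /col_of_inj [->]. Qed.

Section BasePerm.
Variable s0 : 'S_(n + m).
Hypothesis s0E : forall x, s0 (row_of x) = col_of x.

Definition block_perm (p : 'S_#|rowsA| * 'S_#|rowsB|) : 'S_(n + m) :=
  (s0 * transport_perm colA_inj p.1 * transport_perm colB_inj p.2)%g.

Definition lift_piece (p : 'S_#|rowsA| * 'S_#|rowsB|) (x : piece) : piece :=
  match x with
  | inl (inl a) => inl (inl (p.1 a))
  | inl (inr b) => inl (inr (p.2 b))
  | _ => x
  end.

Lemma block_permE p x : block_perm p (row_of x) = col_of (lift_piece p x).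
Proof.
have col_neq y z : y != z -> col_of y != col_of z by rewrite (inj_eq col_of_inj).
rewrite !permM s0E.
case: x => [[a|b]|y].
- rewrite (transport_permE colA_inj) transport_perm_out // => b.
  exact: col_neq.
- rewrite (transport_perm_out colA_inj) ?(transport_permE colB_inj) // => a.
  exact: col_neq.
- rewrite !transport_perm_out // => z; apply: col_neq; by case: y.
Qed.

Local Notation Asub :=
  (\matrix_(x, y) A (enum_val x) (enum_val (castA y)) : 'M_#|rowsA|).
Local Notation Bsub :=
  (\matrix_(x, y) B (enum_val x) (enum_val (castB y)) : 'M_#|rowsB|).

Lemma block_perm_admissible p : admissible S T (block_perm p).
Proof.
apply/admissibleP; split.
- by move=> _ /enum_val_surj [t <-]; exact: (block_permE p (inr (inl t))).
- by move=> _ /enum_val_surj [k <-]; exact: (block_permE p (inr (inr k))).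
- by move=> _ /enum_val_surj [a <-]; rewrite (block_permE p (inl (inl a))) is_left_lshift.
- by move=> _ /enum_val_surj [b <-]; rewrite (block_permE p (inl (inr b))) is_left_rshift.
Qed.

Lemma block_perm_inj : injective block_perm.
Proof.
move=> [p1 p2] [q1 q2] e; congr (_, _); apply/permP => x.
  by have := block_permE (p1, p2) (inl (inl x)); rewrite e block_permE => /col_of_inj [->].
by have := block_permE (p1, p2) (inl (inr x)); rewrite e block_permE => /col_of_inj [->].
Qed.

Lemma block_perm_onto s : admissible S T s -> exists p, block_perm p = s.
Proof.
case/admissibleP=> s_T s_S s_A s_B.
have [t1 t1E] : exists t1 : 'S_#|rowsA|,
    forall a, s (row_of (inl (inl a))) = col_of (inl (inl (t1 a))).
  apply: (perm_factor (e := fun a => row_of (inl (inl a)))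
                      (g := fun a => col_of (inl (inl a)))) => [a a' /row_of_inj [] // | a].
  apply/codomP.
  have [c s_a] := is_leftP (s_A _ (enum_valP a)).
  have c_A : c \in colsA.
    rewrite inE; apply/imsetP => -[k k_S c_k].
    by move: s_a; rewrite c_k -s_S // => /perm_inj /eqP; rewrite eq_lrshift.
  have [y y_c] := enum_val_surj c_A.
  by exists (cast_ord (esym card_blockA) y); rewrite /= cast_ordKV y_c.
have [t2 t2E] : exists t2 : 'S_#|rowsB|,
    forall b, s (row_of (inl (inr b))) = col_of (inl (inr (t2 b))).
  apply: (perm_factor (e := fun b => row_of (inl (inr b)))
                      (g := fun b => col_of (inl (inr b)))) => [b b' /row_of_inj [] // | b].
  apply/codomP.
  have [k s_b] := is_rightP (s_B _ (enum_valP b)).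
  have k_B : k \in colsB.
    rewrite inE; apply/negP => k_T.
    by move: s_b; rewrite -(s_T k k_T) => /perm_inj /eqP; rewrite eq_rlshift.
  have [y y_k] := enum_val_surj k_B.
  by exists (cast_ord (esym card_blockB) y); rewrite /= cast_ordKV y_k.
exists (t1, t2); apply/permP => r; have [row_of' _ row_of'K] := row_of_bij.
rewrite -[r]row_of'K block_permE; case: (row_of' r) => [[a|b]|[t|k]].
- exact: esym (t1E a).
- exact: esym (t2E b).
- by rewrite /= s_T ?enum_valP.
- by rewrite /= s_S ?enum_valP.
Qed.

Lemma det_term_block_perm p :
  det_term (block_perm p) = (-1) ^+ (odd_perm s0 (+) odd_perm p.1 (+) odd_perm p.2) *
    (\prod_x Asub x (p.1 x) * \prod_y Bsub y (p.2 y)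
     * \prod_(k in T) alpha k * \prod_(k in S) beta k).
Proof.
rewrite /det_term /block_perm !odd_permM !odd_transport_perm; congr (_ * _).
rewrite (reindex row_of (onW_bij _ row_of_bij)).
under eq_bigr do rewrite block_permE.
rewrite !big_sumType /= mulrA (big_enum_val alpha) (big_enum_val beta).
apply: congr2; [apply: congr2; [apply: congr2 |] |]; apply: eq_bigr => x _.
- by rewrite bordered_ul mxE.
- by rewrite bordered_dr mxE.
- by rewrite bordered_ur eqxx mulr1.
- by rewrite bordered_dl eqxx mulr1.
Qed.

Lemma admissible_class_sum :
  \sum_(s | admissible S T s) det_term s =
  (-1) ^+ s0 * (\prod_(k in T) alpha k) * (\prod_(k in S) beta k)
    * Bminor B S T * Aminor A i j S T.
Proof.
have -> : \sum_(s | admissible S T s) det_term s = \sum_(s in block_perm @: setT) det_term s.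
  apply: eq_bigl => s; apply/idP/imsetP => [/block_perm_onto [p <-] | [p _ ->]].
    by exists p.
  exact: block_perm_admissible.
rewrite big_imset /=; last by move=> p q _ _ /block_perm_inj.
have -> : \sum_(p in [set: _]) det_term (block_perm p) =
           \sum_(t1 : 'S_#|rowsA|) \sum_(t2 : 'S_#|rowsB|) det_term (block_perm (t1, t2)).
  by rewrite pair_big; apply: eq_big => [p | [t1 t2] _]; rewrite ?in_setT.
rewrite /Aminor (card_in_imset iT) (card_in_imset jS) card_ST !eqxx /= /Bminor /minor.
case: eqP => [eB | []]; last exact: card_blockB.
case: eqP => [eA | []]; last exact: card_blockA.
rewrite (eq_irrelevance eB card_blockB) (eq_irrelevance eA card_blockA) /determinant.
rewrite [RHS]mulrC big_distrl /=; apply: eq_bigr => t1 _.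
rewrite !big_distrr /=; apply: eq_bigr => t2 _.
rewrite det_term_block_perm -[(t1, t2).1]/t1 -[(t1, t2).2]/t2.
by move: (odd_perm s0) (odd_perm t1) (odd_perm t2) => b0 b1 b2; rewrite !signr_addb; ring.
Qed.

End BasePerm.

End AdmissibleClass.

Lemma admissible_sum S T : exists b : bool, #|S| == #|T| ->
  \sum_(s | admissible S T s) det_term s =
  (-1) ^+ b * (\prod_(k in T) alpha k) * (\prod_(k in S) beta k)
    * Bminor B S T * Aminor A i j S T.
Proof.
have [/and3P [/imset_injP iT /imset_injP jS /eqP card_ST] | degenerate] :=
  boolP [&& #|i @: T| == #|T|, #|j @: S| == #|S| & #|S| == #|T|].
  have [s0 s0E] := exists_base_perm iT jS card_ST.
  by exists (odd_perm s0) => _; apply: admissible_class_sum s0E.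
exists false => _; rewrite /Aminor (negbTE degenerate) mulr0 big_pred0 // => s.
apply: contraNF degenerate => adm; have [iT jS] := admissible_inj adm.
by rewrite (card_in_imset iT) (card_in_imset jS) (admissible_card adm) !eqxx.
Qed.

End Bordered.

Unset Implicit Arguments.
Set Strict Implicit.

Theorem lemmaA1 (R : comNzRingType) (n m : nat) (A : 'M[R]_n) (B : 'M[R]_m)
  (i j : 'I_m -> 'I_n) (alpha beta : 'I_m -> R) :
  exists eps : {set 'I_m} -> {set 'I_m} -> bool,
    \det (bordered A B i j alpha beta) =
    \sum_(S : {set 'I_m}) \sum_(T : {set 'I_m} | #|S| == #|T|)
      (-1) ^+ eps S T * (\prod_(k in T) alpha k) * (\prod_(k in S) beta k)
        * Bminor B S T * Aminor A i j S T.
Proof.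
have [eps epsE] := fin_all_exists (fun S =>
  fin_all_exists (admissible_sum A B i j alpha beta S)).
exists eps; rewrite det_bordered_admissible.
by apply: eq_bigr => S _; apply: eq_bigr => T; apply: epsE.
Qed.
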